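(* Let $H:\mathbb{R}^n\rightrightarrows\mathbb{R}^n$ be a closed convex process such that $\mathcal{F}(H)^-\cap\operatorname{cl}(\mathcal{F}(H^+))=\{0\}$. If $V\in\mathcal{V}$ is a weak Lyapunov function for $H$, then $W:=(V|_{\mathcal{F}(H)})^\star$ is a strong Lyapunov function for $H^+$.
   Context: A set-valued map $H:\mathbb{R}^n\rightrightarrows\mathbb{R}^n$ is a convex process if its graph $\{(x,y)\mid y\in H(x)\}$ is a convex cone, and closed if the graph is closed. For a set-valued map $G$, a trajectory is a sequence $(x_k)_{k\ge0}$ with $x_{k+1}\in G(x_k)$ for all $k\ge0$, and $\mathcal{F}(G)$ is the set of $\xi$ such that some trajectory has $x_0=\xi$. The positive dual process is defined by $p\in H^+(q)\iff\langle p,x\rangle\le\langle q,y\rangle$ for all $(x,y)\in\operatorname{graph}(H)$. For a set $\mathcal{C}$, $\mathcal{C}^-=\{y\mid\langle x,y\rangle\le0\ \forall x\in\mathcal{C}\}$; $\operatorname{cl}$ denotes closure. $\mathcal{V}$ is the set of extended real-valued functions $f:\mathbb{R}^n\to\mathbb{R}\cup\{\pm\infty\}$ that are closed and convex (closed convex epigraph), positive semi-definite ($f(0)=0$, $f\ge0$) and positively homogeneous of degree 2 ($f(\lambda x)=\lambda^2f(x)$ for $\lambda\ge0$). For a convex cone $\mathcal{C}$, $f\in\mathcal{V}$ is positive definite with respect to $\mathcal{C}$ if there exist $0<\alpha\le\beta<\infty$ with $\alpha\|x\|^2\le f(x)\le\beta\|x\|^2$ for all $x\in\mathcal{C}$.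 $f|_{\mathcal{C}}(x)=f(x)$ if $x\in\mathcal{C}$ and $+\infty$ otherwise; $f^\star(y)=\sup_x\{y\cdot x-f(x)\}$ is the convex conjugate. For a convex process $G$: $V\in\mathcal{V}$ is a weak Lyapunov function for $G$ if $V$ is positive definite with respect to $\mathcal{F}(G)$ and there is $\gamma\in(0,1)$ such that for every $x\in\mathcal{F}(G)$ there exists $y\in\mathcal{F}(G)\cap G(x)$ with $V(y)\le\gamma V(x)$; $V\in\mathcal{V}$ is a strong Lyapunov function for $G$ if $V$ is positive definite with respect to $\mathcal{F}(G)$ and there is $\gamma\in(0,1)$ such that for every $x\in\mathcal{F}(G)$ and every $y\in\mathcal{F}(G)\cap G(x)$, $V(y)\le\gamma V(x)$. *)

From HB Require Import structures.
From mathcomp Require Import all_boot all_order all_algebra.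
From mathcomp Require Import all_classical all_reals all_analysis.
Set Implicit Arguments. Unset Strict Implicit. Unset Printing Implicit Defensive.
Import Order.TTheory GRing.Theory Num.Theory.
Import numFieldNormedType.Exports.
Local Open Scope classical_set_scope.
Local Open Scope ring_scope.

Section Defs.
Variables (R : realType) (n : nat).
Notation vec := 'rV[R]_n.

Definition dot (x y : vec) : R := \sum_(i < n) x 0 i * y 0 i.

Definition setmap := vec -> set vec.

Definition graph (H : setmap) : set (vec * vec) := [set xy | H xy.1 xy.2].

Definition is_convex_cone {V : lmodType R} (C : set V) : Prop :=
  C 0 /\ (forall x, C x -> forall l : R, 0 <= l -> C (l *: x))
      /\ (forall x y, C x -> C y -> C (x + y)).

Definition convex_process (H : setmap) : Prop :=
  is_convex_cone (graph H).

Definition closed_process (H : setmap) : Prop := closed (graph H).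

Definition feasible (G : setmap) : set vec :=
  [set xi | exists x : nat -> vec, x 0%N = xi /\ forall k, G (x k) (x k.+1)].

Definition dual_process (H : setmap) : setmap :=
  fun q => [set p | forall x y, H x y -> dot p x <= dot q y].

Definition polar (C : set vec) : set vec :=
  [set y | forall x, C x -> dot x y <= 0].

Definition epigraph (f : vec -> \bar R) : set (vec * R) :=
  [set xt | (f xt.1 <= xt.2%:E)%E].

Definition convex_set {V : lmodType R} (C : set V) : Prop :=
  forall x y, C x -> C y -> forall l : R, 0 <= l -> l <= 1 ->
    C (l *: x + (1 - l) *: y).

Definition in_calV (f : vec -> \bar R) : Prop :=
  [/\ closed (epigraph f), convex_set (epigraph f),
      f 0 = 0%E, (forall x, (0 <= f x)%E) &
      (forall (l : R) x, 0 <= l -> f (l *: x) = ((l ^+ 2)%:E * f x)%E)].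

Definition pos_def_wrt (C : set vec) (f : vec -> \bar R) : Prop :=
  exists alpha beta : R, [/\ 0 < alpha, alpha <= beta &
    forall x, C x -> ((alpha * dot x x)%:E <= f x)%E /\
                     (f x <= (beta * dot x x)%:E)%E].

Definition restr_to (f : vec -> \bar R) (C : set vec) : vec -> \bar R :=
  fun x => if x \in C then f x else +oo%E.

Definition conjugate (f : vec -> \bar R) : vec -> \bar R :=
  fun y => ereal_sup [set ((dot y x)%:E - f x)%E | x in setT].

Definition weak_lyapunov (G : setmap) (V : vec -> \bar R) : Prop :=
  [/\ in_calV V, pos_def_wrt (feasible G) V &
   exists gamma : R, [/\ 0 < gamma, gamma < 1 &
     forall x, feasible G x ->
       exists y, [/\ feasible G y, G x y & (V y <= gamma%:E * V x)%E]]].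

Definition strong_lyapunov (G : setmap) (V : vec -> \bar R) : Prop :=
  [/\ in_calV V, pos_def_wrt (feasible G) V &
   exists gamma : R, [/\ 0 < gamma, gamma < 1 &
     forall x y, feasible G x -> feasible G y -> G x y ->
       (V y <= gamma%:E * V x)%E]].

End Defs.

From Pilot Require Import Defs.
From HB Require Import structures.
From mathcomp Require Import all_boot all_order all_algebra.
From mathcomp Require Import all_classical all_reals all_analysis.
From mathcomp Require Import ring lra.
Set Implicit Arguments. Unset Strict Implicit. Unset Printing Implicit Defensive.
Import Order.TTheory GRing.Theory Num.Theory.
Import numFieldNormedType.Exports.
Local Open Scope classical_set_scope.
Local Open Scope ring_scope.

(* W is finite because completing the square gives 0 <= W y <= |y|^2 / (4 alpha)
   when alpha |x|^2 <= V x on F(H); being a supremum of affine functions of y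
   indexed by the cone F(H), it has a closed convex epigraph and is
   2-homogeneous.  For the lower bound on F(H^+), the condition
   F(H)^- ∩ cl F(H^+) = {0} says that every unit vector p of cl F(H^+) has
   <p, x> > 0 for some x of F(H) in the unit ball; by compactness of the unit
   sphere this holds uniformly, <p, x> >= c |p|, and evaluating the supremum at
   a multiple of x gives W p >= c^2 |p|^2 / (4 beta). *)

Section Dot.
Variables (R : realType) (n : nat).
Implicit Types x y z : 'rV[R]_n.

Lemma dotC x y : dot x y = dot y x.
Proof. by apply: eq_bigr => i _; rewrite mulrC. Qed.

Lemma dotDl x y z : dot (x + y) z = dot x z + dot y z.
Proof. by rewrite /dot -big_split; apply: eq_bigr => i _; rewrite mxE mulrDl. Qed.

Lemma dotZl (a : R) x z : dot (a *: x) z = a * dot x z.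
Proof. by rewrite /dot mulr_sumr; apply: eq_bigr => i _; rewrite mxE mulrA. Qed.

Lemma dotZr (a : R) x z : dot z (a *: x) = a * dot z x.
Proof. by rewrite dotC dotZl dotC. Qed.

Lemma dot0l x : dot 0 x = 0.
Proof. by rewrite -(scale0r (0 : 'rV_n)) dotZl mul0r. Qed.

Lemma dot0r x : dot x 0 = 0.
Proof. by rewrite dotC dot0l. Qed.

Lemma dot_ge0 x : 0 <= dot x x.
Proof. by apply: sumr_ge0 => i _; rewrite -expr2 sqr_ge0. Qed.

Lemma sqr_coord_le_dot x (j : 'I_n) : x 0 j ^+ 2 <= dot x x.
Proof.
rewrite /dot (bigD1 j) //= expr2 lerDl.
by apply: sumr_ge0 => i _; rewrite -expr2 sqr_ge0.
Qed.

Lemma dot_sub_sqr_le (a : R) x y :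
  0 < a -> dot y x - a * dot x x <= dot y y / (4 * a).
Proof.
move=> a_gt0; rewrite -subr_ge0.
have -> : dot y y / (4 * a) - (dot y x - a * dot x x) =
    \sum_(i < n) (y 0 i * y 0 i / (4 * a) - (y 0 i * x 0 i - a * (x 0 i * x 0 i))).
  by rewrite sumrB sumrB /dot mulr_suml mulr_sumr.
apply: sumr_ge0 => i _.
have -> : y 0 i * y 0 i / (4 * a) - (y 0 i * x 0 i - a * (x 0 i * x 0 i)) =
    (y 0 i - 2 * a * x 0 i) ^+ 2 / (4 * a) by field; rewrite gt_eqF.
by rewrite divr_ge0 ?sqr_ge0 // ltW // mulr_gt0.
Qed.

Lemma continuous_dotl y : continuous (fun x => dot x y).
Proof.
apply: continuous_big => [|i _ x]; first exact: add_continuous.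
by apply: continuousM; [exact: coord_continuous | exact: cst_continuous].
Qed.

Lemma continuous_dot_sqr : continuous (fun x => dot x x).
Proof.
apply: continuous_big => [|i _ x]; first exact: add_continuous.
by apply: continuousM; exact: coord_continuous.
Qed.

Lemma compact_closedI_unit_sphere (A : set 'rV[R]_n) :
  closed A -> compact (A `&` [set p | dot p p = 1]).
Proof.
move=> clA; apply: bounded_closed_compact.
  exists 1; split; first exact: num_real.
  move=> M M_gt1 p [_ /= p1]; apply: (le_trans _ (ltW M_gt1)).
  rewrite /Num.norm /= mx_normrE; apply: bigmax_le => // -[i j] _ /=.
  have := sqr_coord_le_dot p j; rewrite p1 (ord1 i) => hj.
  by rewrite ler_norml; apply/andP; split; nra.
apply: closedI => //.
apply: (preimage_closed (f := fun p => dot p p) (D := [set r : R | r = 1])).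
  by move=> p _; exact: continuous_dot_sqr.
exact: closed_eq.
Qed.

End Dot.

Section Cone.
Variables (R : realType) (n : nat).
Implicit Types (C : set 'rV[R]_n) (H : setmap R n).

Definition cone C := C 0 /\ forall (l : R) x, 0 <= l -> C x -> C (l *: x).

Lemma feasible_cone H : convex_process H -> cone (feasible H).
Proof.
move=> [H00 [HZ _]]; split; first by exists (fun=> 0).
move=> l _ l0 [x [<- hx]]; exists (fun k => l *: x k); split=> // k.
exact: (HZ (x k, x k.+1) (hx k) l l0).
Qed.

Lemma feasible_dual_process_cone H : cone (feasible (dual_process H)).
Proof.
split; first by exists (fun=> 0); split=> // k a b _; rewrite !dot0l.
move=> l _ l0 [p [<- hp]]; exists (fun k => l *: p k); split=> // k a b hab.
by rewrite !dotZl ler_wpM2l // hp.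
Qed.

End Cone.

Section SupportLowerBound.
Variables (R : realType) (n : nat) (C D : set 'rV[R]_n).
Hypotheses (coneC : cone C) (coneD : cone D).
Hypothesis polarC_closureD : polar C `&` closure D = [set 0].

Lemma not_polar_dot_gt0 p : ~ polar C p ->
  exists2 x, C x /\ dot x x <= 1 & 0 < dot p x.
Proof.
move=> p_npolar.
have [x Cx x_gt0] : exists2 x, C x & 0 < dot x p.
  apply: contra_notP p_npolar => h x Cx; rewrite leNgt; apply/negP => hx.
  by apply: h; exists x.
pose d := dot x x; have d_ge0 : 0 <= d by exact: dot_ge0.
exists ((1 + d)^-1 *: x); first split.
- by apply: coneC.2 Cx; rewrite invr_ge0 addr_ge0.
- have d1_gt0 : 0 < 1 + d by lra.
  rewrite dotZl dotZr -/d mulrA -invfM mulrC ler_pdivrMr ?mulr_gt0 // mul1r.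
  nra.
- by rewrite dotZr dotC mulr_gt0 // invr_gt0; lra.
Qed.

Lemma support_lower_bound_sphere : exists2 c : R, 0 < c &
  forall p, closure D p -> dot p p = 1 ->
    exists2 x, C x /\ dot x x <= 1 & c < dot p x.
Proof.
pose U (k : nat) := \bigcup_(x in [set x | C x /\ dot x x <= 1])
   [set p | k.+1%:R^-1 < dot p x].
have U_open k : [set: nat] k -> open (U k).
  move=> _; apply: bigcup_open => x _.
  apply: (open_comp (f := fun p => dot p x) (D := [set r : R | k.+1%:R^-1 < r])).
    by move=> p _; exact: continuous_dotl.
  exact: open_gt.
have U_cover : closure D `&` [set p | dot p p = 1] `<=` \bigcup_(k in [set: nat]) U k.
  move=> p [Dp /= p1]; have [|x Cx x_gt0] := @not_polar_dot_gt0 p.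
    move=> p_polar; have : (polar C `&` closure D) p by [].
    rewrite polarC_closureD => /= p0.
    by move: p1; rewrite p0 dot0l => /esym/eqP; rewrite oner_eq0.
  exists (Num.truncn (dot p x)^-1) => //; exists x => //=.
  rewrite -[ltRHS]invrK ltf_pV2 ?posrE ?invr_gt0 ?ltr0n //.
  exact: truncnS_gt.
(* The U k increase with k, so a finite subcover is contained in a single U N. *)
have : compact (closure D `&` [set p | dot p p = 1]).
  by apply: compact_closedI_unit_sphere; exact: closed_closure.
rewrite compact_cover => /(_ nat [set: nat] U U_open U_cover) [K _ K_cover].
pose N := (\max_(k <- finmap.enum_fset K) k)%N.
exists N.+1%:R^-1; first by rewrite invr_gt0 ltr0n.
move=> p Dp p1; have [k Kk [x Cx hx]] := K_cover p (conj Dp p1).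
exists x => //; apply: le_lt_trans hx.
rewrite lef_pV2 ?posrE ?ltr0n // ler_nat ltnS.
exact: (leq_bigmax_seq (F := id)).
Qed.

Lemma support_lower_bound : exists2 c : R, 0 < c &
  forall p, D p -> exists2 x, C x /\ dot x x <= 1 & c * Num.sqrt (dot p p) <= dot p x.
Proof.
have [c c_gt0 hc] := support_lower_bound_sphere.
exists c => // p Dp; set s := Num.sqrt (dot p p).
have [s0|s_neq0] := eqVneq s 0.
  by exists 0; [split; [exact: coneC.1 | rewrite dot0l] | rewrite s0 mulr0 dot0r].
have s_gt0 : 0 < s by rewrite lt_def s_neq0 sqrtr_ge0.
have Dp' : closure D (s^-1 *: p).
  by apply: subset_closure; apply: coneD.2 Dp; rewrite invr_ge0 ltW.
have p'1 : dot (s^-1 *: p) (s^-1 *: p) = 1.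
  rewrite dotZl dotZr -(sqr_sqrtr (dot_ge0 p)) -/s; field; exact: lt0r_neq0.
have [x Cx hx] := hc _ Dp' p'1.
exists x => //; rewrite dotZl in hx.
by rewrite -ler_pdivlMr // mulrC ltW.
Qed.

End SupportLowerBound.

Section Conjugate.
Variables (R : realType) (n : nat) (C : set 'rV[R]_n) (V : 'rV[R]_n -> \bar R).
Variables (alpha beta : R).
Hypotheses (coneC : cone C) (alpha_gt0 : 0 < alpha).
Hypothesis V_bounds : forall x, C x ->
  ((alpha * dot x x)%:E <= V x)%E /\ (V x <= (beta * dot x x)%:E)%E.
Hypothesis V_hom : forall (l : R) x, 0 <= l -> C x ->
  V (l *: x) = ((l ^+ 2)%:E * V x)%E.

Let W := conjugate (restr_to V C).
Let v x := fine (V x).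
Let w y := fine (W y).

Let VE x : C x -> V x = (v x)%:E.
Proof. by move=> /V_bounds[]; rewrite /v; case: (V x). Qed.

Let v_ge x : C x -> alpha * dot x x <= v x.
Proof. by move=> Cx; have [] := V_bounds Cx; rewrite VE // lee_fin. Qed.

Let v_le x : C x -> v x <= beta * dot x x.
Proof. by move=> Cx; have [] := V_bounds Cx; rewrite VE // lee_fin. Qed.

Let vZ (l : R) x : 0 <= l -> C x -> v (l *: x) = l ^+ 2 * v x.
Proof. by move=> l0 Cx; rewrite /v V_hom // VE. Qed.

Let conjugate_ge y x : C x -> ((dot y x - v x)%:E <= W y)%E.
Proof.
move=> Cx; apply: ereal_sup_ubound; exists x => //.
by rewrite /restr_to mem_set // VE // EFinB.
Qed.

Let conjugate_le y (M : R) :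
  (forall x, C x -> dot y x - v x <= M) -> (W y <= M%:E)%E.
Proof.
move=> h; apply: ge_ereal_sup => _ [x _ <-]; rewrite /restr_to.
case: ifPn => [/set_mem Cx|_]; first by rewrite VE // -EFinB lee_fin h.
by rewrite addeNy leNye.
Qed.

Lemma conjugate_ge0 y : (0 <= W y)%E.
Proof.
apply: le_trans (conjugate_ge y coneC.1); rewrite lee_fin dot0r sub0r oppr_ge0.
by have := v_le coneC.1; rewrite dot0l mulr0.
Qed.

Lemma conjugate_le_sqr y : (W y <= (dot y y / (4 * alpha))%:E)%E.
Proof.
apply: conjugate_le => x Cx; have := v_ge Cx.
have := dot_sub_sqr_le x y alpha_gt0; lra.
Qed.

Let WE y : W y = (w y)%:E.
Proof. by rewrite /w; move: (conjugate_ge0 y) (conjugate_le_sqr y); case: (W y). Qed.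

Let w_ge y x : C x -> dot y x - v x <= w y.
Proof. by move=> Cx; have := conjugate_ge y Cx; rewrite WE lee_fin. Qed.

Let w_le y (M : R) : (forall x, C x -> dot y x - v x <= M) -> w y <= M.
Proof. by move=> h; have := conjugate_le h; rewrite WE lee_fin. Qed.

Let w0 : w 0 = 0.
Proof.
apply/le_anti/andP; split; last by have := conjugate_ge0 0; rewrite WE lee_fin.
by have := conjugate_le_sqr 0; rewrite WE lee_fin dot0l mul0r.
Qed.

Let wZ (l : R) y : 0 <= l -> w (l *: y) = l ^+ 2 * w y.
Proof.
move=> l0; have [->|l_neq0] := eqVneq l 0; first by rewrite scale0r w0 expr0n mul0r.
have l_gt0 : 0 < l by rewrite lt_def l_neq0.
apply/le_anti/andP; split.
  apply: w_le => x Cx; have Cx' : C (l^-1 *: x) by apply: coneC.2; rewrite ?invr_ge0.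
  have -> : x = l *: (l^-1 *: x) by rewrite scalerA mulfV // scale1r.
  rewrite vZ // dotZl dotZr expr2; have := w_ge y Cx'; nra.
rewrite mulrC -ler_pdivlMr ?exprn_gt0 //; apply: w_le => x Cx.
rewrite ler_pdivlMr ?exprn_gt0 //.
have := w_ge (l *: y) (coneC.2 _ _ l0 Cx); rewrite vZ // dotZl dotZr expr2; lra.
Qed.

Lemma closed_epigraph_conjugate : closed (epigraph W).
Proof.
have -> : epigraph W = \bigcap_(x in C)
    ((fun yt : 'rV[R]_n * R => dot yt.1 x - v x - yt.2) @^-1` [set r | r <= 0]).
  apply/seteqP; split => [[y t] /= + x Cx | [y t] /= h].
    by rewrite /epigraph /= WE lee_fin; have := w_ge y Cx; lra.
  rewrite /epigraph /= WE lee_fin; apply: w_le => x Cx.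
  by have := h x Cx; rewrite /=; lra.
apply: closed_bigI => x Cx; apply: preimage_closed; last exact: closed_le.
move=> yt _.
apply: (@continuousB _ _ _ (fun yt => dot yt.1 x - v x) snd); last exact: cvg_snd.
apply: (@continuousB _ _ _ (fun yt => dot yt.1 x) (fun=> v x)); last exact: cst_continuous.
apply: (@continuous_comp _ _ _ fst (fun y => dot y x)); first exact: cvg_fst.
exact: continuous_dotl.
Qed.

Lemma convex_epigraph_conjugate : Defs.convex_set (epigraph W).
Proof.
move=> [y1 t1] [y2 t2]; rewrite /epigraph /= !WE !lee_fin => h1 h2 l l0 l1.
rewrite /= WE lee_fin; apply: w_le => x Cx; rewrite dotDl !dotZl.
have e1 : l * (dot y1 x - v x) <= l * t1.
  exact: (ler_wpM2l l0 (le_trans (w_ge y1 Cx) h1)).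
have e2 : (1 - l) * (dot y2 x - v x) <= (1 - l) * t2.
  by apply: (ler_wpM2l _ (le_trans (w_ge y2 Cx) h2)); rewrite subr_ge0.
rewrite -[l *: t1]/(l * t1) -[(1 - l) *: t2]/((1 - l) * t2); lra.
Qed.

Lemma conjugate_in_calV : in_calV W.
Proof.
split.
- exact: closed_epigraph_conjugate.
- exact: convex_epigraph_conjugate.
- by rewrite WE w0.
- exact: conjugate_ge0.
- by move=> l y l0; rewrite !WE wZ // EFinM.
Qed.

Section PositiveDefinite.
Variable D : set 'rV[R]_n.
Hypotheses (coneD : cone D) (beta_gt0 : 0 < beta).
Hypothesis polarC_closureD : polar C `&` closure D = [set 0].

Let conjugate_ge_sqr : exists2 a : R, 0 < a &
  forall p, D p -> a * dot p p <= w p.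
Proof.
have [c c_gt0 hc] := support_lower_bound coneC coneD polarC_closureD.
exists (c ^+ 2 / (4 * beta)); first by rewrite divr_gt0 ?exprn_gt0 ?mulr_gt0.
move=> p Dp; have [x [Cx x_le1] hx] := hc p Dp.
set s := Num.sqrt (dot p p) in hx.
have s2 : dot p p = s ^+ 2 by rewrite sqr_sqrtr // dot_ge0.
pose t := c * s / (2 * beta).
have t_ge0 : 0 <= t by rewrite divr_ge0 ?mulr_ge0 ?sqrtr_ge0 // ltW // mulr_gt0.
have Ctx : C (t *: x) := coneC.2 _ _ t_ge0 Cx.
have := w_ge p Ctx; have := v_le Ctx; rewrite !dotZl !dotZr.
have : t * (c * s) <= t * dot p x by exact: ler_wpM2l.
have : beta * (t * (t * dot x x)) <= beta * (t * t).
  by rewrite ler_pM2l // mulrA; exact: ler_piMr (mulr_ge0 t_ge0 t_ge0) x_le1.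
have : t * (c * s) - beta * (t * t) = c ^+ 2 / (4 * beta) * s ^+ 2.
  by rewrite /t; field; rewrite gt_eqF.
rewrite s2; clearbody t; lra.
Qed.

Lemma conjugate_pos_def_wrt : pos_def_wrt D W.
Proof.
have [a a_gt0 ha] := conjugate_ge_sqr.
have b_gt0 : 0 < (4 * alpha)^-1 by rewrite invr_gt0 mulr_gt0.
exists (Num.min a (4 * alpha)^-1), (4 * alpha)^-1; split.
- by rewrite lt_min a_gt0 b_gt0.
- by rewrite ge_min lexx orbT.
move=> p Dp; split; last by rewrite mulrC conjugate_le_sqr.
rewrite WE lee_fin; apply: le_trans (ha p Dp).
by rewrite ler_wpM2r ?dot_ge0 // ge_min lexx.
Qed.

End PositiveDefinite.

Section Decrease.
Variables (H : setmap R n) (gamma : R).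
Hypothesis gamma_gt0 : 0 < gamma.
Hypothesis V_decrease : forall x, C x ->
  exists y, [/\ C y, H x y & (V y <= gamma%:E * V x)%E].

Lemma conjugate_dual_process_decrease p q :
  dual_process H p q -> (W q <= gamma%:E * W p)%E.
Proof.
move=> Hpq; rewrite !WE -EFinM lee_fin; apply: w_le => a Ca.
have [b [Cb Hab]] := V_decrease Ca; rewrite !VE // -EFinM lee_fin => Vb_le.
have Cb' : C (gamma^-1 *: b) by apply: coneC.2; rewrite ?invr_ge0 ?ltW.
have b_eq : b = gamma *: (gamma^-1 *: b) by rewrite scalerA mulfV ?gt_eqF ?scale1r.
have := Hpq a b Hab; rewrite b_eq dotZr => qa_le.
move: Vb_le; rewrite {1}b_eq vZ ?(ltW gamma_gt0) // expr2 -mulrA ler_pM2l // => vb_le.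
have := w_ge p Cb'; rewrite -(ler_pM2l gamma_gt0); lra.
Qed.

End Decrease.

End Conjugate.

Theorem theorem2 (R : realType) (n : nat) (H : setmap R n) (V : 'rV[R]_n -> \bar R) :
  convex_process H -> closed_process H ->
  polar (feasible H) `&` closure (feasible (dual_process H)) = [set 0] ->
  weak_lyapunov H V ->
  strong_lyapunov (dual_process H) (conjugate (restr_to V (feasible H))).
Proof.
move=> Hconv _ Hpolar [[_ _ _ _ V_hom] [alpha [beta [alpha_gt0 alpha_le_beta V_bounds]]]].
move=> [gamma [gamma_gt0 gamma_lt1 V_decrease]].
have FH_cone := feasible_cone Hconv.
have beta_gt0 : 0 < beta := lt_le_trans alpha_gt0 alpha_le_beta.
have {}V_hom l x : 0 <= l -> feasible H x -> V (l *: x) = ((l ^+ 2)%:E * V x)%E.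
  by move=> l0 _; exact: V_hom.
split.
- exact: (conjugate_in_calV FH_cone alpha_gt0 V_bounds V_hom).
- exact: (conjugate_pos_def_wrt FH_cone alpha_gt0 V_bounds
    (feasible_dual_process_cone H) beta_gt0 Hpolar).
- exists gamma; split=> // p q _ _.
  exact: (conjugate_dual_process_decrease FH_cone alpha_gt0 V_bounds V_hom
    gamma_gt0 V_decrease).
Qed.
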